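(* Fix a class $k\in\{1,\dots,K\}$ and a test observation $X_i$. Suppose the class-$k$ training feature vectors $X^k_1,\dots,X^k_{n_k}$ and $X_i$ are exchangeable and that $X_i\sim F_k$. Let $C_o(X_i)$ be the oracle MMDCP prediction set at level $\alpha\in(0,1)$. Then $$\mathbb{P}_k\big(k\in C_o(X_i)\big)\ge 1-\alpha .$$
   Context: Labeled training data $\{(Y_i,X_i)\}_{i=1}^n$ with $Y_i\in\{1,\dots,K\}$, $X_i\in\mathbb{R}^p$; $n_k=\#\{i\le n:Y_i=k\}$ and $X^k_1,\dots,X^k_{n_k}$ are the class-$k$ training feature vectors. Test observations are $X_{n+1},\dots,X_{n+m}$. $F_k$ is the class-$k$ feature distribution with mean $\mu_k$ and positive definite covariance $\Sigma_k$. Oracle score: $s_{ok}(x)=\|(\mathrm{diag}(\Sigma_k))^{-1/2}(x-\mu_k)\|_2^2$. Oracle conformal $p$-value: $p^i_{ok}=\big(1+\sum_{l=1}^{n_k}\mathbb{1}\{s_{ok}(X_i)\le s_{ok}(X^k_l)\}\big)/(n_k+1)$. Oracle MMDCP: for each $k$, if $m=1$, the test point is accepted for class $k$ iff $p^i_{ok}>\lfloor (n_k+1)\alpha\rfloor/(n_k+1)$; if $m>1$, the Benjamini–Hochberg adjusted $p$-values $\tilde p^i_{ok}$ of $\{p^i_{ok}\}_{i=n+1}^{n+m}$ are computed (if $p_{(1)}\le\dots\le p_{(m)}$ are the ordered values, the adjusted value of $p_{(j)}$ is $\min\{1,\min_{l\ge j} m\,p_{(l)}/l\}$), and $X_i$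 is accepted for class $k$ iff $\tilde p^i_{ok}>\lfloor (n_k+1)\alpha\rfloor/(n_k+1)$. The prediction set is $C_o(X_i)=\{k: X_i \text{ accepted for class } k\}$. $\mathbb{P}_k$ denotes probability under the joint law of the data when $X_i\sim F_k$. *)

From HB Require Import structures.
From mathcomp Require Import all_boot all_order all_algebra all_fingroup.
From mathcomp Require Import all_classical all_reals all_analysis.
Set Implicit Arguments. Unset Strict Implicit. Unset Printing Implicit Defensive.
Import Order.TTheory GRing.Theory Num.Theory.
Local Open Scope classical_set_scope.
Local Open Scope ring_scope.

Section MMDCP.
Variable R : realType.

Definition oracle_score (p : nat) (mu : 'rV[R]_p) (Sig : 'M[R]_p)
    (x : 'rV[R]_p) : R :=
  \sum_(j < p) (x ord0 j - mu ord0 j) ^+ 2 / Sig j j.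

Definition conf_pval (n : nat) (s : R) (cal : 'I_n -> R) : R :=
  (1 + #|[set l : 'I_n | s <= cal l]|)%:R / (n.+1)%:R.

(* Benjamini-Hochberg adjusted p-value of pv i:
   if p_(1) <= ... <= p_(m) (here 0-based sorted seq s), the adjusted value of
   p_(j) is min{1, min_{l >= j} m p_(l) / l}. *)
Definition bh_adjusted (m : nat) (pv : 'I_m -> R) (i : 'I_m) : R :=
  let s := sort <=%R [seq pv l | l <- enum 'I_m] in
  let j := index (pv i) s in
  \big[Order.min/1]_(j <= l < m) (m%:R * nth 0 s l / (l.+1)%:R).

Definition threshold (n : nat) (alpha : R) : R :=
  (Num.floor ((n.+1)%:R * alpha))%:~R / (n.+1)%:R.

Definition oracle_pval (p K m : nat) (Om : Type) (nc : 'I_K -> nat)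
    (Xtr : forall c : 'I_K, 'I_(nc c) -> Om -> 'rV[R]_p)
    (Xte : 'I_m -> Om -> 'rV[R]_p)
    (mu : 'I_K -> 'rV[R]_p) (Sig : 'I_K -> 'M[R]_p)
    (c : 'I_K) (w : Om) (l : 'I_m) : R :=
  conf_pval (oracle_score (mu c) (Sig c) (Xte l w))
            (fun j => oracle_score (mu c) (Sig c) (Xtr c j w)).

Definition oracle_MMDCP_set (p K m : nat) (Om : Type) (nc : 'I_K -> nat)
    (Xtr : forall c : 'I_K, 'I_(nc c) -> Om -> 'rV[R]_p)
    (Xte : 'I_m -> Om -> 'rV[R]_p)
    (mu : 'I_K -> 'rV[R]_p) (Sig : 'I_K -> 'M[R]_p)
    (alpha : R) (w : Om) (i : 'I_m) : {set 'I_K} :=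
  [set c : 'I_K |
    if m == 1%N then
      threshold (nc c) alpha < oracle_pval Xtr Xte mu Sig c w i
    else
      threshold (nc c) alpha < bh_adjusted (oracle_pval Xtr Xte mu Sig c w) i].

Definition posdef (p : nat) (S : 'M[R]_p) : Prop :=
  S^T = S /\ forall u : 'rV[R]_p, u != 0 -> 0 < (u *m S *m u^T) 0 0.

Section prob.
Context {d : measure_display} {Om : measurableType d}.
Variable P : probability Om R.

Definition random_vector (p : nat) (X : Om -> 'rV[R]_p) : Prop :=
  forall j : 'I_p, measurable_fun setT (fun w => X w ord0 j).

Definition has_mean_cov (p : nat) (X : Om -> 'rV[R]_p)
    (mu : 'rV[R]_p) (Sig : 'M[R]_p) : Prop :=
  forall j l : 'I_p,
    [/\ P.-integrable setT (fun w => (X w ord0 j)%:E),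
        ('E_P[fun w => X w ord0 j] = (mu ord0 j)%:E)%E,
        P.-integrable setT
          (fun w => ((X w ord0 j - mu ord0 j) * (X w ord0 l - mu ord0 l))%:E) &
        ('E_P[fun w => ((X w ord0 j - mu ord0 j) * (X w ord0 l - mu ord0 l))%R]
           = (Sig j l)%:E)%E].

(* exchangeability of (Z_0,...,Z_{N-1}): the joint law is invariant under every
   permutation of the indices; equality of joint laws is expressed on measurable
   rectangles, which determine the law on the product Borel sigma-algebra. *)
Definition exchangeable (p N : nat) (Z : 'I_N -> Om -> 'rV[R]_p) : Prop :=
  forall (s : {perm 'I_N}) (A : 'I_N -> 'I_p -> set R),
    (forall l j, measurable (A l j)) ->
    P [set w | forall l j, Z (s l) w ord0 j \in A l j]
    = P [set w | forall l j, Z l w ord0 j \in A l j].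

End prob.
End MMDCP.

Definition calib_and_test (R : realType) (p n : nat) (Om : Type)
    (Xk : 'I_n -> Om -> 'rV[R]_p) (Xi : Om -> 'rV[R]_p)
    (l : 'I_n.+1) : Om -> 'rV[R]_p :=
  match (insub (nat_of_ord l) : option 'I_n) with
  | Some j => Xk j
  | None => Xi
  end.

From HB Require Import structures.
From mathcomp Require Import all_boot all_order all_algebra all_fingroup.
From mathcomp Require Import all_classical all_reals all_analysis.
From mathcomp Require Import measurable_realfun.
Import numFieldNormedType.Exports.
Import Order.TTheory GRing.Theory Num.Theory.

Set Implicit Arguments.
Unset Strict Implicit.
Unset Printing Implicit Defensive.

Local Open Scope classical_set_scope.
Local Open Scope ring_scope.

(* Let N = n_k + 1 and let S_1, ..., S_N be the oracle scores of the class-k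
   calibration points followed by that of X_i; they are exchangeable.  X_i is
   rejected for class k only if its conformal p-value is at most J / N with
   J = floor(N alpha), i.e. only if at most J of the S_l (S_N included) are
   >= S_N.  By exchangeability (transported from cylinder sets to the product
   sigma-algebra by uniqueness of measures) every index r has the same
   probability of having at most J scores above it, and at most J indices can
   have this property at the same time; hence that probability is at most
   J / N <= alpha.  The Benjamini-Hochberg adjustment only increases p-values,
   so it can only turn rejections into acceptances. *)

Section upper_count.
Context {I : finType} {dT : Order.disp_t} {T : orderType dT}.

Definition upper_count (v : I -> T) (r : I) : nat := #|[set l | (v r <= v l)%O]%SET|.

Lemma card_upper_count_le (v : I -> T) (j : nat) :
  (#|[set r | (upper_count v r <= j)%N]%SET| <= j)%N.
Proof.
set A := [set r | _]%SET.
have [->|[r0 Ar0]] := set_0Vmem A; first by rewrite cards0.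
(* every counted index scores at least as high as the lowest-scoring one *)
have [r Ar minr] := arg_minP v Ar0.
have /[!inE] Arj : r \in A := Ar.
apply: leq_trans Arj.
by apply: subset_leq_card; apply/fintype.subsetP => l Al; rewrite inE; apply: minr.
Qed.

Lemma upper_count_perm (v : I -> T) (s : {perm I}) (r : I) :
  upper_count (v \o s) r = upper_count v (s r).
Proof.
rewrite /upper_count -[RHS](card_preimset _ (@perm_inj _ s)).
by apply: fintype.eq_card => l; rewrite !inE.
Qed.

End upper_count.

Section conformal_pvalues.
Variable R : realType.

Lemma bh_adjusted_ge (m : nat) (pv : 'I_m -> R) (i : 'I_m) :
  (forall l, 0 <= pv l) -> pv i <= 1 -> pv i <= bh_adjusted pv i.
Proof.
move=> pv_ge0 pvi_le1; rewrite /bh_adjusted.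
set s := sort _ _.
have size_s : size s = m by rewrite size_sort size_map size_enum_ord.
have pvi_s : pv i \in s by rewrite mem_sort; apply: map_f; rewrite mem_enum.
have sorted_s : sorted <=%R s by apply: sort_sorted; exact: le_total.
rewrite big_nat_cond; elim/big_rec: _ => [//|l x /andP[/andP[il lm] _] ih].
rewrite le_min ih andbT.
have pvi_le_l : pv i <= nth 0 s l.
  rewrite -{1}(nth_index 0 pvi_s).
  by apply: (sorted_leq_nth le_trans lexx) => //; rewrite inE ?index_mem // size_s.
have nth_ge0 : 0 <= nth 0 s l := le_trans (pv_ge0 i) pvi_le_l.
apply: le_trans pvi_le_l _.
by rewrite ler_pdivlMr // mulrC ler_wpM2r // ler_nat.
Qed.

Lemma conf_pval_ge0 (n : nat) (s : R) (cal : 'I_n -> R) : 0 <= conf_pval s cal.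
Proof. by rewrite divr_ge0. Qed.

Lemma conf_pval_le1 (n : nat) (s : R) (cal : 'I_n -> R) : conf_pval s cal <= 1.
Proof.
rewrite ler_pdivrMr // mul1r ler_nat ltnS.
by apply: leq_trans (max_card _) _; rewrite card_ord.
Qed.

Lemma thresholdE (n : nat) (alpha : R) : 0 <= alpha ->
  threshold n alpha = (Num.trunc ((n.+1)%:R * alpha))%:R / (n.+1)%:R.
Proof.
move=> alpha_ge0; have Nalpha_ge0 : 0 <= (n.+1)%:R * alpha by rewrite mulr_ge0.
by rewrite /threshold truncn_floor Nalpha_ge0 natr_absz ger0_norm // floor_ge0.
Qed.

Lemma threshold_lt_conf_pval (n : nat) (alpha s : R) (cal : 'I_n -> R) :
  0 <= alpha -> (Num.trunc ((n.+1)%:R * alpha) < 1 + #|[set l | (s <= cal l)%R]|)%N ->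
  threshold n alpha < conf_pval s cal.
Proof.
by move=> alpha_ge0 lt_count; rewrite thresholdE // ltr_pM2r ?invr_gt0 // ltr_nat.
Qed.

End conformal_pvalues.

Lemma mem_oracle_MMDCP_set (R : realType) (p K m : nat) (Om : Type)
    (nc : 'I_K -> nat) (Xtr : forall c : 'I_K, 'I_(nc c) -> Om -> 'rV[R]_p)
    (Xte : 'I_m -> Om -> 'rV[R]_p) (mu : 'I_K -> 'rV[R]_p) (Sig : 'I_K -> 'M[R]_p)
    (alpha : R) (c : 'I_K) (w : Om) (i : 'I_m) :
  threshold (nc c) alpha < oracle_pval Xtr Xte mu Sig c w i ->
  c \in oracle_MMDCP_set Xtr Xte mu Sig alpha w i.
Proof.
move=> lt_pval; rewrite inE; case: ifP => _ //.
apply: (lt_le_trans lt_pval); apply: bh_adjusted_ge => [l|];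
  [exact: conf_pval_ge0 | exact: conf_pval_le1].
Qed.

Lemma measurable_ffun_pred (d : measure_display) (T : measurableType d)
    (I : finType) (g : I -> T -> bool) (Q : pred {ffun I -> bool}) :
  (forall i, measurable [set w | g i w]) -> measurable [set w | Q [ffun i => g i w]].
Proof.
move=> mg.
have -> : [set w | Q [ffun i => g i w]] =
    \bigcup_(b in [set b | Q b]) \bigcap_(i in [set: I]) [set w | g i w = b i].
  apply/seteqP; split => w /=.
    by move=> Qw; exists [ffun i => g i w] => // i _; rewrite ffunE.
  move=> [b Qb gb]; suff -> : [ffun i => g i w] = b by [].
  by apply/ffunP => i; rewrite ffunE; apply: gb.
apply: fin_bigcup_measurable; first exact: finite_finset.
move=> b _; apply: fin_bigcap_measurable; first exact: finite_finset.
move=> i _; case: (b i); first exact: mg.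
rewrite (_ : [set w | g i w = false] = ~` [set w | g i w]); first exact: measurableC.
by apply/seteqP; split => w /=; case: (g i w).
Qed.

Section score_measurability.
Context (R : realType) (d : measure_display) (T : measurableType d) (p : nat).
Variables (mu : 'rV[R]_p) (S : 'M[R]_p).

Lemma measurable_oracle_score (X : T -> 'rV[R]_p) :
  random_vector X -> measurable_fun setT (fun w => oracle_score mu S (X w)).
Proof.
move=> mX; apply: measurable_sum => j.
apply: (measurable_funM (f := fun w => (X w ord0 j - mu ord0 j) ^+ 2)) => //.
by apply/measurable_funX/measurable_funB.
Qed.

Lemma measurable_oracle_score_le (X Y : T -> 'rV[R]_p) :
  random_vector X -> random_vector Y ->
  measurable [set w | oracle_score mu S (X w) <= oracle_score mu S (Y w)].
Proof.
move=> mX mY; rewrite -[X in measurable X]setTI.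
by apply: measurable_fun_le => //; apply: measurable_oracle_score.
Qed.

Lemma measurable_upper_count_le (N : nat) (X : 'I_N -> T -> 'rV[R]_p)
    (r : 'I_N) (j : nat) :
  (forall l, random_vector (X l)) ->
  measurable [set w | (upper_count (fun l => oracle_score mu S (X l w)) r <= j)%N].
Proof.
move=> mX.
pose g l w := oracle_score mu S (X r w) <= oracle_score mu S (X l w).
pose Q (b : {ffun 'I_N -> bool}) := (#|[set l | b l]%SET| <= j)%N.
rewrite (_ : [set w | _] = [set w | Q [ffun l => g l w]]).
  by apply: measurable_ffun_pred => l; apply: measurable_oracle_score_le.
by apply/seteqP; split => w; rewrite /= /Q (eq_finset _ (ffunE (g^~ w))).
Qed.

End score_measurability.

Lemma measurable_oracle_MMDCP_mem (R : realType) (d : measure_display)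
    (Om : measurableType d) (p K m : nat) (nc : 'I_K -> nat)
    (Xtr : forall c : 'I_K, 'I_(nc c) -> Om -> 'rV[R]_p)
    (Xte : 'I_m -> Om -> 'rV[R]_p) (mu : 'I_K -> 'rV[R]_p) (Sig : 'I_K -> 'M[R]_p)
    (alpha : R) (c : 'I_K) (i : 'I_m) :
  (forall l, random_vector (Xtr c l)) -> (forall l, random_vector (Xte l)) ->
  measurable [set w | c \in oracle_MMDCP_set Xtr Xte mu Sig alpha w i].
Proof.
move=> mXtr mXte; set s := oracle_score (mu c) (Sig c).
pose g (lj : 'I_m * 'I_(nc c)) w := s (Xte lj.1 w) <= s (Xtr c lj.2 w).
pose pval (b : {ffun 'I_m * 'I_(nc c) -> bool}) (l : 'I_m) : R :=
  (1 + #|[set j | b (l, j)]%SET|)%:R / (nc c).+1%:R.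
pose Q b := if m == 1%N then threshold (nc c) alpha < pval b i
            else threshold (nc c) alpha < bh_adjusted (pval b) i.
have pvalE w : oracle_pval Xtr Xte mu Sig c w = pval [ffun lj => g lj w].
  apply/funext => l; rewrite /oracle_pval /conf_pval /pval.
  congr (_%:R / _); congr (1 + _)%N; apply: fintype.eq_card => j.
  by rewrite !inE ffunE; apply/idP/idP => [/set_mem|/mem_set].
rewrite (_ : [set w | _] = [set w | Q [ffun lj => g lj w]]).
  by apply: measurable_ffun_pred => lj; apply: measurable_oracle_score_le.
by apply/seteqP; split => w; rewrite /= inE /Q pvalE.
Qed.

Section exchangeable_law.
Context (R : realType) (d : measure_display) (Om : measurableType d).
Variables (P : probability Om R) (N p : nat).

Definition cylinders : set (set ('I_N -> 'rV[R]_p)) :=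
  [set [set z : 'I_N -> 'rV[R]_p | forall l j, z l ord0 j \in A l j] |
     A in [set A : 'I_N -> 'I_p -> set R | forall l j, measurable (A l j)]].

Local Notation sample := (g_sigma_algebraType cylinders).

Definition joint (Z : 'I_N -> Om -> 'rV[R]_p) : Om -> sample := fun w l => Z l w.

Lemma cylinders_setI_closed : setI_closed cylinders.
Proof.
move=> _ _ [A mA <-] [B mB <-].
exists (fun l j => A l j `&` B l j); first by move=> l j; apply: measurableI.
apply/seteqP; split => z /=.
  by move=> zAB; split => l j; have := zAB l j; rewrite in_setI => /andP[].
by move=> [zA zB] l j; rewrite in_setI zA zB.
Qed.

Lemma cylindersT : cylinders setT.
Proof.
exists (fun _ _ => setT) => //.
by apply/seteqP; split => z // _ l j; rewrite in_setT.
Qed.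

Lemma random_vector_coord (l : 'I_N) : random_vector (fun z : sample => z l).
Proof.
move=> j _ Y mY; rewrite setTI; apply: sub_sigma_algebra.
exists (fun l' j' => if (l' == l) && (j' == j) then Y else setT).
  by move=> l' j'; case: ifP.
apply/seteqP; split => z /=.
  by move=> zY; have := zY l j; rewrite !eqxx inE.
by move=> Yz l' j'; case: ifP => [/andP[/eqP-> /eqP->]|_]; rewrite inE.
Qed.

Lemma measurable_joint (Z : 'I_N -> Om -> 'rV[R]_p) :
  (forall l, random_vector (Z l)) -> measurable_fun setT (joint Z).
Proof.
move=> mZ; apply: (@measurability _ _ Om sample setT (joint Z) cylinders) => //.
move=> _ [_ [A mA <-] <-].
have -> : setT `&` joint Z @^-1` [set z | forall l j, z l ord0 j \in A l j] =
    \bigcap_(l in [set: 'I_N]) \bigcap_(j in [set: 'I_p])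
      (setT `&` (fun w => Z l w ord0 j) @^-1` A l j).
  apply/seteqP; split => w /=.
    by move=> [_ ZA] l _ j _; split => //; have := ZA l j; rewrite inE.
  by move=> ZA; split => // l j; rewrite inE; have [] := ZA l I j I.
apply: fin_bigcap_measurable; first exact: finite_finset.
move=> l _; apply: fin_bigcap_measurable; first exact: finite_finset.
by move=> j _; apply: mZ.
Qed.

Lemma exchangeable_joint_preimage (Z : 'I_N -> Om -> 'rV[R]_p) (s : {perm 'I_N})
    (B : set sample) :
  (forall l, random_vector (Z l)) -> exchangeable P Z -> measurable B ->
  P (joint (fun l => Z (s l)) @^-1` B) = P (joint Z @^-1` B).
Proof.
move=> mZ exZ mB.
(* the pushforwards below are measures only given these two facts *)
have mZs : measurable_fun setT (joint (fun l => Z (s l))).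
  by apply: measurable_joint => l; apply: mZ.
have mZ_joint : measurable_fun setT (joint Z) by apply: measurable_joint.
apply: (@measure_unique _ R sample cylinders (fun=> setT) erefl
  cylinders_setI_closed (fun=> cylindersT) _
  (pushforward P (joint (fun l => Z (s l)))) (pushforward P (joint Z))) => //.
- by rewrite bigcup_const.
- by move=> _ [A mA <-]; apply: exZ.
- by move=> _; change (P setT < +oo)%E; rewrite probability_setT ltry.
Qed.

Lemma sum_probability_le (I : finType) (A : I -> set Om) (j : nat) :
  (forall r, measurable (A r)) -> (forall w, (#|[set r | w \in A r]%SET| <= j)%N) ->
  (\sum_r P (A r) <= j%:R%:E)%E.
Proof.
move=> mA overlap.
have -> : (\sum_r P (A r) = \int[P]_w (\sum_r \1_(A r) w)%:E)%E.
  under eq_integral do rewrite -sumEFin.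
  rewrite ge0_integral_sum //; last by move=> r; apply/measurable_EFinP.
  by apply: eq_bigr => r _; rewrite integral_indic // setIT.
apply: (@le_trans _ _ (\int[P]_w (j%:R)%:E)%E); last first.
  by rewrite integral_cst // -[leRHS]mule1 -(probability_setT P).
apply: ge0_le_integral => //.
- by move=> w _; rewrite lee_fin sumr_ge0.
- by apply/measurable_EFinP/measurable_sum => r; apply: measurable_indic.
move=> w _; rewrite lee_fin.
rewrite (eq_bigr (fun r => (w \in A r)%:R)); last by move=> r _; rewrite indicE.
by rewrite -natr_sum ler_nat; move: (overlap w); rewrite cardsE -sum1_card big_mkcond.
Qed.

Lemma exchangeable_upper_count_le (Z : 'I_N -> Om -> 'rV[R]_p)
    (mu : 'rV[R]_p) (S : 'M[R]_p) (r : 'I_N) (j : nat) :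
  (forall l, random_vector (Z l)) -> exchangeable P Z ->
  (P [set w | (upper_count (fun l => oracle_score mu S (Z l w)) r <= j)%N]
     <= (j%:R / N%:R)%:E)%E.
Proof.
move=> mZ exZ.
pose E r := [set w | (upper_count (fun l => oracle_score mu S (Z l w)) r <= j)%N].
have mE r' : measurable (E r') by apply: measurable_upper_count_le.
have E_eq r' : P (E r') = P (E r).
  pose B := [set z : sample | (upper_count (fun l => oracle_score mu S (z l)) r <= j)%N].
  have -> : E r' = joint (fun l => Z (tperm r r' l)) @^-1` B.
    apply/seteqP; split => w;
    by rewrite /E /B /= (upper_count_perm (fun l => oracle_score mu S (Z l w))) tpermL.
  rewrite exchangeable_joint_preimage //.
  by apply: measurable_upper_count_le => l; apply: random_vector_coord.
have overlap w : (#|[set r' | w \in E r']%SET| <= j)%N.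
  apply: leq_trans (card_upper_count_le (fun l => oracle_score mu S (Z l w)) j).
  by apply/subset_leq_card/fintype.subsetP => r'; rewrite !inE.
have N_gt0 : (0 < N)%N := leq_ltn_trans (leq0n r) (ltn_ord r).
have [q PE] : exists q, P (E r) = q%:E.
  by exists (fine (P (E r))); rewrite fineK // fin_num_measure.
have := sum_probability_le mE overlap.
rewrite (eq_bigr _ (fun r' _ => E_eq r')) sumr_const card_ord -/(E r) PE.
move=> h; rewrite lee_fin ler_pdivlMr ?ltr0n // -lee_fin; apply: le_trans h.
by rewrite mulr_natr EFin_natmul.
Qed.

End exchangeable_law.

Section calibration_and_test.
Context (R : realType) (p n : nat) (Om : Type).
Variables (Xk : 'I_n -> Om -> 'rV[R]_p) (Xi : Om -> 'rV[R]_p).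

Lemma calib_and_test_widen (l : 'I_n) :
  calib_and_test Xk Xi (widen_ord (leqnSn n) l) = Xk l.
Proof.
rewrite /calib_and_test; case: insubP => [u _ /= ul|]; last by rewrite /= ltn_ord.
by congr Xk; apply: val_inj.
Qed.

Lemma calib_and_test_max : calib_and_test Xk Xi ord_max = Xi.
Proof. by rewrite /calib_and_test; case: insubP => [u /=|//]; rewrite ltnn. Qed.

Lemma upper_count_calib_and_test (f : 'rV[R]_p -> R) (w : Om) :
  upper_count (fun l => f (calib_and_test Xk Xi l w)) ord_max =
  (1 + #|[set l | (f (Xi w) <= f (Xk l w))%R]|)%N.
Proof.
rewrite /upper_count -sum1dep_card big_mkcond big_ord_recr /= calib_and_test_max lexx.
rewrite addnC -big_mkcond sum1dep_card; congr (1 + _)%N.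
apply: fintype.eq_card => l; rewrite !inE calib_and_test_widen.
by apply/idP/idP => [/mem_set|/set_mem].
Qed.

End calibration_and_test.

Lemma random_vector_calib_and_test (R : realType) (d : measure_display)
    (Om : measurableType d) (p n : nat)
    (Xk : 'I_n -> Om -> 'rV[R]_p) (Xi : Om -> 'rV[R]_p) (l : 'I_n.+1) :
  (forall l, random_vector (Xk l)) -> random_vector Xi ->
  random_vector (calib_and_test Xk Xi l).
Proof. by move=> mXk mXi; rewrite /calib_and_test; case: insubP. Qed.

Theorem corollary1 (R : realType) (d : measure_display) (Om : measurableType d)
    (P : probability Om R) (p K m : nat) (nc : 'I_K -> nat)
    (Xtr : forall c : 'I_K, 'I_(nc c) -> Om -> 'rV[R]_p)
    (Xte : 'I_m -> Om -> 'rV[R]_p)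
    (mu : 'I_K -> 'rV[R]_p) (Sig : 'I_K -> 'M[R]_p)
    (alpha : R) (k : 'I_K) (i : 'I_m) :
  0 < alpha < 1 ->
  (forall c, posdef (Sig c)) ->
  (forall c (l : 'I_(nc c)), random_vector (Xtr c l)) ->
  (forall l, random_vector (Xte l)) ->
  (forall c (l : 'I_(nc c)), has_mean_cov P (Xtr c l) (mu c) (Sig c)) ->
  has_mean_cov P (Xte i) (mu k) (Sig k) ->
  exchangeable P (calib_and_test (Xtr k) (Xte i)) ->
  (P [set w | k \in oracle_MMDCP_set Xtr Xte mu Sig alpha w i]
     >= (1 - alpha)%:E)%E.
Proof.
move=> /andP[/ltW alpha_ge0 _] _ mXtr mXte _ _ exZ.
set Z := calib_and_test (Xtr k) (Xte i).
set s := oracle_score (mu k) (Sig k).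
pose J := Num.trunc ((nc k).+1%:R * alpha).
pose E := [set w | (upper_count (fun l => s (Z l w)) ord_max <= J)%N].
have mZ l : random_vector (Z l) by apply: random_vector_calib_and_test.
have mE : measurable E by apply: measurable_upper_count_le.
have PE : (P E <= alpha%:E)%E.
  apply: le_trans (exchangeable_upper_count_le (mu k) (Sig k) ord_max J mZ exZ) _.
  by rewrite lee_fin ler_pdivrMr // mulrC truncn_le mulr_ge0.
have accept : ~` E `<=` [set w | k \in oracle_MMDCP_set Xtr Xte mu Sig alpha w i].
  move=> w /negP; rewrite -ltnNge upper_count_calib_and_test => ltJ.
  exact/mem_oracle_MMDCP_set/threshold_lt_conf_pval.
apply: (@le_trans _ _ (P (~` E))); first by rewrite probability_setC // EFinB leeB.
apply: le_measure accept; rewrite inE; first exact: measurableC.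
exact: measurable_oracle_MMDCP_mem.
Qed.
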